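(* Let $g,h$ be complex-valued functions on the positive integers such that $g(n),h(n)=O(e^{cn})$ for some $c\ge0$. Define finite differences by $\Delta^0h(j)=h(j)$ and $\Delta^mh(j)=\Delta^{m-1}h(j+1)-\Delta^{m-1}h(j)$ for $m\ge1$, and let $G(z)=\sum_{n=1}^\infty g(n)z^{n-1}$. Then there is a disc centred at $z=0$ on which $$\sum_{n=1}^\infty g(n)h(n)z^{n-1}=\sum_{m=0}^\infty G^{(m)}(z)\,\Delta^mh(1)\,\frac{z^m}{m!}.$$ Similarly, if $g,h$ are complex-valued functions on the non-negative integers with $g(n),h(n)=O(e^{cn})$ and $\tilde G(z)=\sum_{n=0}^\infty g(n)z^n$, then on some disc centred at $0$, $$\sum_{n=0}^\infty g(n)h(n)z^n=\sum_{m=0}^\infty\tilde G^{(m)}(z)\,\Delta^mh(0)\,\frac{z^m}{m!}.$$ *)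

From Stdlib Require Import Reals Arith.
From Coquelicot Require Import Coquelicot.
Open Scope R_scope.

Fixpoint fdiff (m : nat) (h : nat -> C) (j : nat) : C :=
  match m with
  | O => h j
  | S m' => Cminus (fdiff m' h (S j)) (fdiff m' h j)
  end.

Definition bigO_exp (c : R) (f : nat -> C) : Prop :=
  exists K : R, exists N : nat, forall n : nat, (N <= n)%nat ->
    Cmod (f n) <= K * exp (c * INR n).

Definition Cp (z : C) (n : nat) : C := @pow_n C_Ring z n.

(* Newton's forward-difference formula h(N) = sum_(m<=N) C(N,m) Delta^m h(0) rewrites the N-th
   term g(N) h(N) z^N as sum_(m<=N) [g(N) N!/(N-m)! z^(N-m)] Delta^m h(0) z^m / m!.  With
   A = e^c one has |g(n)|, |h(n)| <= K A^n and |Delta^m h(0)| <= K (2A)^m, so for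
   |z| < 1/(A(1+2A)) this triangular array is absolutely summable and may be summed row by
   row.  The m-th row is G^(m)(z) Delta^m h(0) z^m / m!, because G^(m) is the power series
   with coefficients g(n+m) (n+m)!/n!, of radius at least 1/A, differentiated termwise.
   The statement for functions on the positive integers is the one for the shifted
   sequences g(n+1), h(n+1). *)

From Stdlib Require Import Reals Arith Lia Lra Psatz ClassicalEpsilon FunctionalExtensionality.
From Coquelicot Require Import Coquelicot.
Open Scope R_scope.

(** * Newton's forward-difference formula *)

Fixpoint binom (n k : nat) : nat :=
  match n, k with
  | _, O => 1%nat
  | O, S _ => O
  | S n', S k' => (binom n' k' + binom n' (S k'))%nat
  end.

Lemma binom_0_r n : binom n 0 = 1%nat.
Proof. destruct n; reflexivity. Qed.

Lemma binom_gt n : forall k, (n < k)%nat -> binom n k = O.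
Proof.
  induction n as [|n IH]; intros k Hk; destruct k as [|k]; try lia; simpl; auto.
  rewrite !IH; lia.
Qed.

Lemma binom_succ_mul n : forall k, (S k * binom (S n) (S k) = S n * binom n k)%nat.
Proof.
  induction n as [|n IH]; intros k; [destruct k; simpl; lia|].
  change (binom (S (S n)) (S k)) with (binom (S n) k + binom (S n) (S k))%nat.
  destruct k as [|k].
  - specialize (IH 0%nat). rewrite !binom_0_r in *. lia.
  - pose proof (IH k). pose proof (IH (S k)).
    change (binom (S n) (S k)) with (binom n k + binom n (S k))%nat in *.
    nia.
Qed.

Lemma binom_fact n k : (binom (n + k) k * fact k * fact n = fact (n + k))%nat.
Proof.
  induction k as [|k IH].
  - rewrite binom_0_r, Nat.add_0_r. simpl. lia.
  - rewrite Nat.add_succ_r.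
    change (fact (S k)) with (S k * fact k)%nat.
    change (fact (S (n + k))) with (S (n + k) * fact (n + k))%nat.
    rewrite <- IH.
    replace (binom (S (n + k)) (S k) * (S k * fact k) * fact n)%nat
      with (S k * binom (S (n + k)) (S k) * fact k * fact n)%nat by ring.
    rewrite binom_succ_mul. ring.
Qed.

Lemma sum_n_succ_l {G : AbelianMonoid} (a : nat -> G) n :
  sum_n a (S n) = plus (a O) (sum_n (fun k => a (S k)) n).
Proof.
  induction n as [|n IH].
  - rewrite sum_Sn, !sum_O. reflexivity.
  - rewrite sum_Sn, IH, sum_Sn, plus_assoc. reflexivity.
Qed.

Lemma sum_n_zero_tail {G : AbelianMonoid} (a : nat -> G) N M :
  (forall m, (N < m)%nat -> a m = zero) -> (N <= M)%nat -> sum_n a M = sum_n a N.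
Proof.
  intros Hz HNM. induction HNM as [|M HNM IH]; [reflexivity|].
  rewrite sum_Sn, IH, Hz by lia. apply plus_zero_r.
Qed.

Section Pascal.
Context {K : Ring} (cast : nat -> K).
Hypothesis cast_plus : forall a b, cast (a + b)%nat = plus (cast a) (cast b).
Hypothesis cast_0 : cast O = zero.

Lemma sum_binom_succ (u : nat -> K) (N : nat) :
  sum_n (fun m => mult (cast (binom (S N) m)) (u m)) (S N) =
  plus (sum_n (fun m => mult (cast (binom N m)) (u (S m))) N)
       (sum_n (fun m => mult (cast (binom N m)) (u m)) N).
Proof.
  assert (Hshift : sum_n (fun m => mult (cast (binom N m)) (u (S m))) N =
    sum_n (fun m => match m with O => zero | S k => mult (cast (binom N k)) (u m) end) (S N)).
  { rewrite sum_n_succ_l. symmetry. apply plus_zero_l. }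
  rewrite Hshift, <- (sum_n_zero_tail (fun m => mult (cast (binom N m)) (u m)) N (S N));
    [|intros m Hm; rewrite binom_gt, cast_0 by lia; apply mult_zero_l|lia].
  rewrite <- sum_n_plus. apply sum_n_ext. intros [|m]; simpl.
  - rewrite plus_zero_l, binom_0_r. reflexivity.
  - rewrite cast_plus, mult_distr_r. reflexivity.
Qed.
End Pascal.

Lemma binomial_sum (x : R) N :
  (1 + x) ^ N = sum_n (fun m => INR (binom N m) * x ^ m) N.
Proof.
  induction N as [|N IH]; [rewrite sum_O; simpl; ring|].
  change ((1 + x) ^ S N = sum_n (fun m => mult (INR (binom (S N) m)) (x ^ m)) (S N)).
  rewrite (sum_binom_succ INR plus_INR eq_refl).
  rewrite (sum_n_ext (fun m => mult (INR (binom N m)) (x ^ S m))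
                     (fun m => mult x (INR (binom N m) * x ^ m)))
    by (intros m; change (INR (binom N m) * (x * x ^ m) = x * (INR (binom N m) * x ^ m)); ring).
  rewrite sum_n_mult_l.
  change ((1 + x) ^ S N = x * sum_n (fun m => INR (binom N m) * x ^ m) N
                          + sum_n (fun m => INR (binom N m) * x ^ m) N).
  rewrite <- IH. simpl. ring.
Qed.

Lemma fdiff_newton (h : nat -> C) N : forall j,
  h (N + j)%nat = sum_n (fun m => (RtoC (INR (binom N m)) * fdiff m h j)%C) N.
Proof.
  induction N as [|N IH]; intros j.
  - rewrite sum_O. simpl. ring.
  - change (h (S N + j)%nat = sum_n (fun m => mult (RtoC (INR (binom (S N) m))) (fdiff m h j)) (S N)).
    rewrite (sum_binom_succ (fun n => RtoC (INR n)));
      [|intros a b; rewrite plus_INR; apply RtoC_plus|reflexivity].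
    rewrite Nat.add_succ_l, <- Nat.add_succ_r, IH, <- sum_n_plus.
    apply sum_n_ext. intros m. simpl. unfold plus, mult; simpl. ring.
Qed.

Lemma fdiff_shift h m : forall j, fdiff m (fun n => h (S n)) j = fdiff m h (S j).
Proof. induction m as [|m IH]; intros j; simpl; rewrite ?IH; reflexivity. Qed.

(** * Exponential growth *)

Lemma sum_n_m_nonneg (a : nat -> R) n m :
  (forall k, 0 <= a k) -> 0 <= sum_n_m a n m.
Proof.
  intros Ha. pose proof (sum_n_m_le (fun _ => 0) a n m Ha) as H.
  rewrite (sum_n_m_const_zero (G := R_AbelianMonoid)) in H. exact H.
Qed.

Lemma sum_n_nonneg (a : nat -> R) n : (forall k, 0 <= a k) -> 0 <= sum_n a n.
Proof. apply sum_n_m_nonneg. Qed.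

Lemma term_le_sum_n (a : nat -> R) N k :
  (forall n, 0 <= a n) -> (k <= N)%nat -> a k <= sum_n a N.
Proof.
  intros Ha Hk. induction Hk as [|N Hk IH].
  - destruct k; [rewrite sum_O; lra|].
    pose proof (sum_n_nonneg a k Ha). rewrite sum_Sn. change (a (S k) <= sum_n a k + a (S k)). lra.
  - specialize (Ha (S N)). rewrite sum_Sn. change (a k <= sum_n a N + a (S N)). lra.
Qed.

Lemma exp_mult_INR c n : exp (c * INR n) = exp c ^ n.
Proof.
  induction n as [|n IH]; [rewrite Rmult_0_r; apply exp_0|].
  rewrite S_INR, Rmult_plus_distr_l, Rmult_1_r, exp_plus, IH. simpl. ring.
Qed.

(* The finitely many terms before the threshold of [bigO_exp] are absorbed into the constant. *)
Lemma bigO_exp_everywhere c f : 0 <= c -> bigO_exp c f ->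
  exists K, forall n, Cmod (f n) <= K * exp c ^ n.
Proof.
  intros Hc [K [N HK]]. exists (Rabs K + sum_n (fun k => Cmod (f k)) N). intros n.
  assert (HA : 1 <= exp c ^ n) by (apply pow_R1_Rle; pose proof (exp_ineq1_le c); lra).
  pose proof (sum_n_nonneg (fun k => Cmod (f k)) N (fun k => Cmod_ge_0 _)).
  pose proof (Rabs_pos K).
  destruct (le_lt_dec N n) as [HNn|HnN].
  - specialize (HK n HNn). rewrite exp_mult_INR in HK.
    pose proof (Rle_abs K). nra.
  - pose proof (term_le_sum_n (fun k => Cmod (f k)) N n (fun k => Cmod_ge_0 _) ltac:(lia)).
    nra.
Qed.

Lemma bigO_exp_shift c f : bigO_exp c f -> bigO_exp c (fun n => f (S n)).
Proof.
  intros [K [N HK]]. exists (K * exp c), N. intros n Hn.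
  specialize (HK (S n) ltac:(lia)).
  rewrite S_INR, Rmult_plus_distr_l, Rmult_1_r, exp_plus in HK. lra.
Qed.

(* Each difference at most doubles the bound and shifts the index by one. *)
Lemma fdiff_bound h K A : 1 <= A -> (forall n, Cmod (h n) <= K * A ^ n) ->
  forall m j, Cmod (fdiff m h j) <= K * 2 ^ m * A ^ (j + m).
Proof.
  intros HA Hh.
  assert (HK : 0 <= K) by (specialize (Hh O); pose proof (Cmod_ge_0 (h O)); simpl in Hh; lra).
  induction m as [|m IH]; intros j.
  - rewrite Nat.add_0_r, Rmult_1_r. apply Hh.
  - simpl fdiff. unfold Cminus. eapply Rle_trans; [apply Cmod_triangle|].
    rewrite Cmod_opp. specialize (IH (S j)) as H1. specialize (IH j) as H2.
    rewrite Nat.add_succ_l, <- Nat.add_succ_r in H1.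
    assert (A ^ (j + m) <= A ^ (j + S m)) by (apply Rle_pow; [lra|lia]).
    assert (0 <= K * 2 ^ m) by (apply Rmult_le_pos; [lra|apply pow_le; lra]).
    simpl pow. nra.
Qed.

(** * Series in normed modules *)

Section NormedSeries.
Context {K : AbsRing} {V : NormedModule K}.

Lemma is_series_norm_le (a : nat -> V) (b : nat -> R) la lb :
  is_series a la -> is_series b lb -> (forall n, norm (a n) <= b n) -> norm la <= lb.
Proof.
  intros Ha Hb Hab.
  assert (Hl : is_lim_seq (fun N => norm (sum_n a N)) (norm la))
    by (eapply filterlim_comp; [exact Ha|apply filterlim_norm]).
  assert (Hp : forall N, norm (sum_n a N) <= sum_n b N).
  { intros N. eapply Rle_trans; [apply norm_sum_n_m|]. apply sum_n_m_le. exact Hab. }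
  exact (is_lim_seq_le _ _ (norm la) lb Hp Hl Hb).
Qed.

Lemma is_series_sum_n (v : nat -> nat -> V) (s : nat -> V) M :
  (forall m, is_series (v m) (s m)) ->
  is_series (fun N => sum_n (fun m => v m N) M) (sum_n s M).
Proof.
  intros Hv. induction M as [|M IH].
  - rewrite sum_O. eapply is_series_ext; [|apply Hv]. intros N. rewrite sum_O. reflexivity.
  - rewrite sum_Sn. eapply is_series_ext; [|exact (is_series_plus _ _ _ _ IH (Hv (S M)))].
    intros N. rewrite sum_Sn. reflexivity.
Qed.

Lemma is_series_zero_prefix (a : nat -> V) m l :
  (forall k, (k < m)%nat -> a k = zero) ->
  is_series (fun n => a (n + m)%nat) l -> is_series a l.
Proof.
  intros Hz Hs. destruct m as [|m].
  - eapply is_series_ext; [|exact Hs]. intros n. cbv beta. rewrite Nat.add_0_r. reflexivity.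
  - apply (is_series_decr_n a (S m)); [lia|].
    rewrite (sum_n_ext_loc a (fun _ => zero)) by (intros k Hk; apply Hz; lia).
    unfold sum_n. rewrite sum_n_m_const_zero.
    change (is_series (fun k => a (S m + k)%nat) (minus l zero)). rewrite minus_zero_r.
    eapply is_series_ext; [|exact Hs]. intros n. rewrite Nat.add_comm. reflexivity.
Qed.

Lemma is_series_succ_of_head_zero (a : nat -> V) l :
  a O = zero -> is_series a l -> is_series (fun n => a (S n)) l.
Proof.
  intros H0 Ha. apply is_series_incr_1.
  match goal with |- is_series _ ?x => replace x with l; [exact Ha|] end.
  rewrite H0. symmetry. apply plus_zero_r.
Qed.

Lemma is_lim_of_norm_bound (u : nat -> V) (l : V) (t : nat -> R) :
  (forall n, norm (minus l (u n)) <= t n) -> is_lim_seq t 0 ->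
  filterlim u eventually (locally l).
Proof.
  intros Hb Ht. apply filterlim_locally_ball_norm. intros eps.
  apply (is_lim_seq_spec t 0) in Ht. destruct (Ht eps) as [N HN].
  exists N. intros n Hn. specialize (HN n Hn). specialize (Hb n).
  unfold ball_norm. rewrite <- norm_opp, opp_minus. rewrite Rminus_0_r in HN.
  apply Rabs_lt_between in HN. lra.
Qed.

Lemma norm_sum_n_minus_le (u : nat -> V) M N :
  (forall m, (N < m)%nat -> u m = zero) ->
  norm (minus (sum_n u N) (sum_n u M))
    <= if (N <=? M)%nat then 0 else sum_n (fun m => norm (u m)) N.
Proof.
  intros Hz. destruct (N <=? M)%nat eqn:HNM.
  - apply Nat.leb_le in HNM. rewrite (sum_n_zero_tail u N M Hz HNM), minus_eq_zero.
    apply Req_le, norm_zero.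
  - apply Nat.leb_gt in HNM.
    apply Rle_trans with (norm (sum_n_m u (S M) N)).
    { right. f_equal. symmetry. apply (sum_n_m_sum_n (G := NormedModule.AbelianGroup K V)). lia. }
    eapply Rle_trans; [apply norm_sum_n_m|].
    unfold sum_n. rewrite (sum_n_m_Chasles _ 0 M N) by lia.
    pose proof (sum_n_m_nonneg (fun m => norm (u m)) 0 M (fun m => norm_ge_0 _)).
    change (sum_n_m (fun m => norm (u m)) (S M) N <=
            sum_n_m (fun m => norm (u m)) 0 M + sum_n_m (fun m => norm (u m)) (S M) N).
    lra.
Qed.

End NormedSeries.

Lemma is_series_tail (d : nat -> R) (D : R) M :
  is_series d D -> is_series (fun n => d (n + S M)%nat) (D - sum_n d M).
Proof.
  intros HD. eapply is_series_ext; [|apply (is_series_incr_n d (S M) (D - sum_n d M)); [lia|]].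
  - intros n. cbv beta. rewrite Nat.add_comm. reflexivity.
  - match goal with |- is_series _ ?x => replace x with D; [exact HD|] end.
    change (D = D - sum_n d M + sum_n d M). ring.
Qed.

(* Fubini for a triangular array whose diagonal sums converge absolutely: [L] minus the
   [M]-th partial sum of [s] is bounded by the tail beyond [M] of the absolute diagonal series. *)
Lemma is_series_triangle_swap {K : AbsRing} {V : NormedModule K}
    (v : nat -> nat -> V) (s : nat -> V) (L : V) :
  (forall m N, (N < m)%nat -> v m N = zero) ->
  (forall m, is_series (v m) (s m)) ->
  ex_series (fun N => sum_n (fun m => norm (v m N)) N) ->
  is_series (fun N => sum_n (fun m => v m N) N) L ->
  is_series s L.
Proof.
  intros Hz Hv [D HD] HL.
  set (d := fun N => sum_n (fun m => norm (v m N)) N) in HD.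
  apply (is_lim_of_norm_bound _ _ (fun M => D - sum_n d M)).
  - intros M.
    apply (is_series_norm_le
             (fun N => minus (sum_n (fun m => v m N) N) (sum_n (fun m => v m N) M))
             (fun N => if (N <=? M)%nat then 0 else d N));
      [apply is_series_minus; [exact HL|apply is_series_sum_n, Hv]| |].
    + apply (is_series_zero_prefix _ (S M)).
      * intros k Hk. replace (k <=? M)%nat with true by (symmetry; apply Nat.leb_le; lia). reflexivity.
      * eapply is_series_ext; [|exact (is_series_tail d D M HD)].
        intros n. replace (n + S M <=? M)%nat with false by (symmetry; apply Nat.leb_gt; lia).
        reflexivity.
    + intros N. apply norm_sum_n_minus_le. intros m Hm. apply Hz, Hm.
  - replace (Finite 0) with (Finite (D - D)) by (f_equal; ring).
    apply is_lim_seq_minus'; [apply is_lim_seq_const|exact HD].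
Qed.

Lemma ex_series_geom_scal (M q : R) : 0 <= q < 1 -> ex_series (fun n => M * q ^ n).
Proof.
  intros Hq. apply (ex_series_scal_l (K := R_AbsRing) (V := R_NormedModule) M (fun n => q ^ n)).
  exists (/ (1 - q)). apply is_series_geom. rewrite Rabs_pos_eq; lra.
Qed.

Lemma ex_series_Rle (a b : nat -> R) :
  (forall n, 0 <= a n <= b n) -> ex_series b -> ex_series a.
Proof.
  intros Hab. apply (ex_series_le (K := R_AbsRing) (V := R_CompleteNormedModule)).
  intros n. specialize (Hab n). change (Rabs (a n) <= b n). rewrite Rabs_pos_eq; lra.
Qed.

Lemma ex_series_bounded (a : nat -> R) : ex_series a -> (forall n, 0 <= a n) ->
  exists B, forall n, a n <= B.
Proof.
  intros [l Hl] Ha. exists l. intros n.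
  apply Rle_trans with (sum_n a n); [apply term_le_sum_n; auto|].
  apply (is_lim_seq_incr_compare (sum_n a) l Hl). intros k.
  specialize (Ha (S k)). rewrite sum_Sn. change (sum_n a k <= sum_n a k + a (S k)). lra.
Qed.

(* The second derivative of the geometric series [sum q^n] has radius 1. *)
Lemma ex_series_sqr_pow q : 0 <= q < 1 -> ex_series (fun n => INR n ^ 2 * q ^ n).
Proof.
  intros Hq.
  assert (Hr : CV_radius (fun _ => 1) = 1).
  { replace (Finite 1) with (Finite (/ 1)) by (f_equal; field).
    apply CV_radius_finite_DAlembert; [intros; lra|lra|].
    eapply is_lim_seq_ext; [|apply is_lim_seq_const].
    intros n. simpl. rewrite Rdiv_1_r, Rabs_R1. reflexivity. }
  assert (Hin : Rbar_lt (Rabs q) (CV_radius (PS_derive_n 2 (fun _ => 1)))).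
  { rewrite CV_radius_derive_n, Hr. simpl. rewrite Rabs_pos_eq; lra. }
  apply (ex_series_le (K := R_AbsRing) (V := R_CompleteNormedModule)) with
    (2 := CV_disk_inside _ _ Hin).
  intros n. unfold PS_derive_n. change (Rabs (INR n ^ 2 * q ^ n) <=
    Rabs (INR (fact (n + 2)) / INR (fact n) * 1 * q ^ n)).
  replace (INR (fact (n + 2)) / INR (fact n) * 1) with (INR (S (S n)) * INR (S n)).
  - pose proof (pos_INR n). pose proof (pow_le q n ltac:(lra)).
    rewrite !Rabs_pos_eq, !S_INR; [nra| |]; rewrite ?S_INR; apply Rmult_le_pos; nra.
  - replace (n + 2)%nat with (S (S n)) by lia.
    change (fact (S (S n))) with (S (S n) * (S n * fact n))%nat. rewrite !mult_INR.
    pose proof (INR_fact_lt_0 n). field. lra.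
Qed.

(** * Complex power series *)

Lemma Cp_S z n : Cp z (S n) = (z * Cp z n)%C.
Proof. reflexivity. Qed.

Lemma Cmod_Cp z n : Cmod (Cp z n) = Cmod z ^ n.
Proof.
  induction n as [|n IH]; [apply Cmod_1|].
  rewrite Cp_S, Cmod_mult, IH. reflexivity.
Qed.

Lemma Cp_plus z n m : Cp z (n + m) = (Cp z n * Cp z m)%C.
Proof. exact (pow_n_plus (K := C_Ring) z n m). Qed.

(* A sum of [a] when the series converges; an arbitrary value otherwise. *)
Definition Csum (a : nat -> C) : C :=
  epsilon (inhabits (RtoC 0)) (fun l => is_series a l).

Lemma is_series_Csum (a : nat -> C) : ex_series a -> is_series a (Csum a).
Proof. intros [l H]. unfold Csum. apply epsilon_spec. exists l. exact H. Qed.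

Definition CPSeries (a : nat -> C) (z : C) : C := Csum (fun n => (a n * Cp z n)%C).

(* Complex counterparts of Coquelicot's [PS_derive] and [PS_derive_n]. *)
Definition CPS_derive (a : nat -> C) (n : nat) : C := (RtoC (INR (S n)) * a (S n))%C.

Definition CPS_derive_n (k : nat) (a : nat -> C) (n : nat) : C :=
  (RtoC (INR (fact (n + k)) / INR (fact n)) * a (n + k)%nat)%C.

(* The radius of convergence of [sum a n z^n] is at least [r]. *)
Definition radius_ge (a : nat -> C) (r : R) : Prop :=
  forall rho, 0 <= rho < r -> exists M, forall n, Cmod (a n) * rho ^ n <= M.

Lemma radius_ge_shift a r : radius_ge a r -> radius_ge (fun n => a (S n)) r.
Proof.
  intros Ha rho Hrho. set (r' := (rho + r) / 2).
  destruct (Ha r' ltac:(unfold r'; lra)) as [M HM].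
  exists (M / r'). intros n. specialize (HM (S n)).
  assert (Hr' : 0 < r') by (unfold r'; lra).
  assert (rho ^ n <= r' ^ n) by (apply pow_incr; unfold r'; lra).
  apply Rle_trans with (Cmod (a (S n)) * r' ^ n); [apply Rmult_le_compat_l; [apply Cmod_ge_0|lra]|].
  apply (Rmult_le_reg_r r' _ _ Hr'). replace (M / r' * r') with M by (field; lra).
  simpl pow in HM. lra.
Qed.

Lemma radius_ge_geom a r rho : radius_ge a r -> 0 <= rho < r ->
  exists M q, 0 <= q < 1 /\ forall n, Cmod (a n) * rho ^ n <= M * q ^ n.
Proof.
  intros Ha Hrho. set (r' := (rho + r) / 2).
  assert (Hr' : rho < r') by (unfold r'; lra).
  destruct (Ha r' ltac:(unfold r'; lra)) as [M HM].
  exists M, (rho / r'). split.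
  - split; [apply Rdiv_le_0_compat; lra|].
    apply (Rmult_lt_reg_r r'); [lra|]. unfold Rdiv. rewrite Rmult_assoc, Rinv_l; lra.
  - intros n. replace (rho ^ n) with (r' ^ n * (rho / r') ^ n)
      by (rewrite <- Rpow_mult_distr; f_equal; field; lra).
    pose proof (pow_le (rho / r') n ltac:(apply Rdiv_le_0_compat; lra)).
    rewrite <- Rmult_assoc. apply Rmult_le_compat_r; [lra|apply HM].
Qed.

Lemma ex_series_Cmod_pow a r rho : radius_ge a r -> 0 <= rho < r ->
  ex_series (fun n => Cmod (a n) * rho ^ n).
Proof.
  intros Ha Hrho. destruct (radius_ge_geom a r rho Ha Hrho) as [M [q [Hq HM]]].
  apply (ex_series_Rle _ (fun n => M * q ^ n)); [|apply ex_series_geom_scal, Hq].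
  intros n. split; [|apply HM]. apply Rmult_le_pos; [apply Cmod_ge_0|apply pow_le; lra].
Qed.

Lemma is_series_CPSeries a r z : radius_ge a r -> Cmod z < r ->
  is_series (fun n => (a n * Cp z n)%C) (CPSeries a z).
Proof.
  intros Ha Hz. apply is_series_Csum.
  apply (ex_series_le (K := C_AbsRing) (V := C_CompleteNormedModule)) with
    (b := fun n => Cmod (a n) * Cmod z ^ n).
  - intros n. change (Cmod (a n * Cp z n)%C <= Cmod (a n) * Cmod z ^ n).
    rewrite Cmod_mult, Cmod_Cp. lra.
  - apply (ex_series_Cmod_pow a r). exact Ha. split; [apply Cmod_ge_0|exact Hz].
Qed.

Lemma ex_series_Cmod_sqr_pow a r rho : radius_ge a r -> 0 <= rho < r ->
  ex_series (fun n => Cmod (a (S n)) * INR n ^ 2 * rho ^ n).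
Proof.
  intros Ha Hrho.
  destruct (radius_ge_geom _ r rho (radius_ge_shift a r Ha) Hrho) as [M [q [Hq HM]]].
  apply (ex_series_Rle _ (fun n => M * (INR n ^ 2 * q ^ n))).
  - intros n. specialize (HM n). pose proof (pow_le rho n ltac:(lra)).
    pose proof (Cmod_ge_0 (a (S n))). pose proof (pow_le (INR n) 2 (pos_INR n)).
    split; [apply Rmult_le_pos; [apply Rmult_le_pos|]; lra|nra].
  - apply (ex_series_scal_l (K := R_AbsRing) (V := R_NormedModule) M).
    apply ex_series_sqr_pow, Hq.
Qed.

Lemma radius_ge_CPS_derive a r : radius_ge a r -> radius_ge (CPS_derive a) r.
Proof.
  intros Ha rho Hrho.
  destruct (radius_ge_geom _ r rho (radius_ge_shift a r Ha) Hrho) as [M [q [Hq HM]]].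
  destruct (ex_series_bounded _ (ex_series_sqr_pow q Hq)) as [B HB].
  { intros n. apply Rmult_le_pos; apply pow_le; [apply pos_INR|lra]. }
  assert (HM0 : 0 <= M).
  { specialize (HM O). pose proof (Cmod_ge_0 (a 1%nat)). simpl in HM. nra. }
  exists (M * (B + 1)). intros n. unfold CPS_derive.
  rewrite Cmod_mult, Cmod_R, Rabs_pos_eq by apply pos_INR.
  specialize (HM n). specialize (HB n).
  pose proof (pow_le q n ltac:(lra)).
  assert (q ^ n <= 1) by (rewrite <- (pow1 n); apply pow_incr; lra).
  pose proof (Rmult_le_pos _ _ (Cmod_ge_0 (a (S n))) (pow_le rho n ltac:(lra))).
  assert (INR (S n) <= INR n ^ 2 + 1).
  { destruct n; [simpl; lra|]. pose proof (pos_INR n). rewrite !S_INR. nra. }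
  nra.
Qed.

Definition pow_remainder (w z : C) (n : nat) : C :=
  (Cp w (S n) - Cp z (S n) - RtoC (INR (S n)) * Cp z n * (w - z))%C.

Lemma pow_remainder_0 w z : pow_remainder w z O = 0%C.
Proof. unfold pow_remainder. rewrite !Cp_S. simpl. ring. Qed.

Lemma pow_remainder_succ w z n : pow_remainder w z (S n) =
  (w * pow_remainder w z n + RtoC (INR (S n)) * Cp z n * ((w - z) * (w - z)))%C.
Proof. unfold pow_remainder. rewrite !Cp_S, (S_INR (S n)), RtoC_plus. ring. Qed.

Lemma pow_remainder_bound w z rho : 0 < rho -> Cmod w <= rho -> Cmod z <= rho ->
  forall n, rho * Cmod (pow_remainder w z n) <= INR n ^ 2 * rho ^ n * Cmod (w - z) ^ 2.
Proof.
  intros Hrho Hw Hz n. set (d := Cmod (w - z)).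
  induction n as [|n IH]; [rewrite pow_remainder_0, Cmod_0; simpl; lra|].
  rewrite pow_remainder_succ.
  eapply Rle_trans; [apply Rmult_le_compat_l; [lra|apply Cmod_triangle]|].
  rewrite !Cmod_mult, Cmod_R, Rabs_pos_eq, Cmod_Cp by apply pos_INR. fold d.
  set (E := Cmod (pow_remainder w z n)) in *.
  assert (HE : 0 <= E) by apply Cmod_ge_0.
  assert (Hd : 0 <= d) by apply Cmod_ge_0.
  assert (HZ : Cmod z ^ n <= rho ^ n) by (apply pow_incr; split; [apply Cmod_ge_0|exact Hz]).
  pose proof (pos_INR n). pose proof (pow_le rho n ltac:(lra)).
  assert (H1 : rho * (Cmod w * E) <= rho * (rho * E))
    by (apply Rmult_le_compat_l; [lra|apply Rmult_le_compat_r; lra]).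
  assert (H2 : rho * (rho * E) <= rho * (INR n ^ 2 * rho ^ n * d ^ 2))
    by (apply Rmult_le_compat_l; lra).
  assert (H3 : rho * (INR (S n) * Cmod z ^ n * (d * d)) <= rho * (INR (S n) * rho ^ n * (d * d))).
  { apply Rmult_le_compat_l; [lra|]. apply Rmult_le_compat_r; [nra|].
    apply Rmult_le_compat_l; [apply pos_INR|exact HZ]. }
  assert (H4 : 0 <= rho * INR n * rho ^ n * (d * d))
    by (repeat apply Rmult_le_pos; lra).
  rewrite S_INR in *. simpl pow. nra.
Qed.

Lemma is_derive_of_quadratic_bound (f : C -> C) (z l : C) (K delta : R) :
  0 < delta ->
  (forall w, Cmod (w - z) < delta -> Cmod (f w - f z - (w - z) * l)%C <= K * Cmod (w - z) ^ 2) ->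
  is_derive f z l.
Proof.
  intros Hdelta Hf. split; [apply is_linear_scal_l|].
  intros x Hx. apply (is_filter_lim_locally_unique (K := C_AbsRing)
                        (V := AbsRing_NormedModule C_AbsRing)) in Hx. subst x.
  intros eps. apply (locally_le_locally_norm (K := C_AbsRing) (V := AbsRing_NormedModule C_AbsRing)).
  pose proof (cond_pos eps). pose proof (Rabs_pos K).
  assert (He : 0 < Rmin delta (eps / (Rabs K + 1)))
    by (apply Rmin_pos; [lra|apply Rdiv_lt_0_compat; lra]).
  exists (mkposreal _ He). intros w Hw.
  change (Cmod (w - z) < Rmin delta (eps / (Rabs K + 1))) in Hw.
  change (Cmod (f w - f z - (w - z) * l)%C <= eps * Cmod (w - z)).
  pose proof (Rmin_l delta (eps / (Rabs K + 1))) as Hmin1.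
  pose proof (Rmin_r delta (eps / (Rabs K + 1))) as Hmin2.
  eapply Rle_trans; [apply Hf; lra|].
  set (d := Cmod (w - z)) in *. assert (Hd0 : 0 <= d) by apply Cmod_ge_0.
  assert (Hd : d * Rabs K <= eps).
  { apply Rle_trans with (d * (Rabs K + 1)); [nra|].
    apply (Rmult_le_reg_r (/ (Rabs K + 1))); [apply Rinv_0_lt_compat; lra|].
    rewrite Rmult_assoc, Rinv_r by lra. lra. }
  assert (K * d ^ 2 <= d * (d * Rabs K)) by (pose proof (Rle_abs K); simpl; nra).
  assert (d * (d * Rabs K) <= d * eps) by (apply Rmult_le_compat_l; lra).
  lra.
Qed.

Lemma CPSeries_remainder_le a r z w rho : radius_ge a r -> 0 < rho < r ->
  Cmod w <= rho -> Cmod z <= rho ->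
  Cmod (CPSeries a w - CPSeries a z - (w - z) * CPSeries (CPS_derive a) z)%C
    <= Series (fun n => Cmod (a (S n)) * INR n ^ 2 * rho ^ n) / rho * Cmod (w - z) ^ 2.
Proof.
  intros Ha Hrho Hw Hz.
  set (Q := fun n => Cmod (a (S n)) * INR n ^ 2 * rho ^ n).
  pose proof (is_series_CPSeries a r w Ha ltac:(lra)) as Sw.
  pose proof (is_series_CPSeries a r z Ha ltac:(lra)) as Sz.
  pose proof (is_series_CPSeries _ r z (radius_ge_CPS_derive a r Ha) ltac:(lra)) as Sd.
  pose proof (is_series_minus _ _ _ _ Sw Sz) as S1.
  apply is_series_succ_of_head_zero in S1;
    [|change ((a O * Cp w O + - (a O * Cp z O))%C = 0%C); simpl; ring].
  pose proof (is_series_minus _ _ _ _ S1 (is_series_scal (w - z)%C _ _ Sd)) as S2.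
  pose proof (is_series_scal_r (Cmod (w - z) ^ 2 / rho) Q _
                (Series_correct _ (ex_series_Cmod_sqr_pow a r rho Ha ltac:(lra)))) as SB.
  replace (Series Q / rho * Cmod (w - z) ^ 2) with (Series Q * (Cmod (w - z) ^ 2 / rho))
    by (field; lra).
  apply (is_series_norm_le _ _ _ _ S2 SB). intros n. cbv beta.
  change (Cmod (a (S n) * Cp w (S n) - a (S n) * Cp z (S n)
                - (w - z) * (CPS_derive a n * Cp z n))%C
          <= Q n * (Cmod (w - z) ^ 2 / rho)).
  replace (a (S n) * Cp w (S n) - a (S n) * Cp z (S n) - (w - z) * (CPS_derive a n * Cp z n))%C
    with (a (S n) * pow_remainder w z n)%C by (unfold pow_remainder, CPS_derive; ring).
  rewrite Cmod_mult. unfold Q.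
  replace (Cmod (a (S n)) * INR n ^ 2 * rho ^ n * (Cmod (w - z) ^ 2 / rho))
    with (Cmod (a (S n)) * (INR n ^ 2 * rho ^ n * Cmod (w - z) ^ 2 / rho)) by (field; lra).
  apply Rmult_le_compat_l; [apply Cmod_ge_0|].
  apply (Rmult_le_reg_l rho); [lra|].
  replace (rho * (INR n ^ 2 * rho ^ n * Cmod (w - z) ^ 2 / rho))
    with (INR n ^ 2 * rho ^ n * Cmod (w - z) ^ 2) by (field; lra).
  apply pow_remainder_bound; lra.
Qed.

Lemma is_derive_CPSeries a r z : radius_ge a r -> Cmod z < r ->
  is_derive (CPSeries a) z (CPSeries (CPS_derive a) z).
Proof.
  intros Ha Hz. set (rho := (Cmod z + r) / 2). pose proof (Cmod_ge_0 z).
  apply (is_derive_of_quadratic_bound _ _ _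
           (Series (fun n => Cmod (a (S n)) * INR n ^ 2 * rho ^ n) / rho) (rho - Cmod z));
    [unfold rho; lra|].
  intros w Hw. apply (CPSeries_remainder_le a r); [exact Ha|unfold rho; lra| |unfold rho; lra].
  replace w with (z + (w - z))%C by ring.
  eapply Rle_trans; [apply Cmod_triangle|]. lra.
Qed.

Lemma CPS_derive_n_0 a n : CPS_derive_n 0 a n = a n.
Proof.
  unfold CPS_derive_n. rewrite Nat.add_0_r, Rdiv_diag by (apply not_0_INR, fact_neq_0).
  apply Cmult_1_l.
Qed.

Lemma CPS_derive_n_S k a : CPS_derive_n (S k) a = CPS_derive (CPS_derive_n k a).
Proof.
  apply functional_extensionality. intros n. unfold CPS_derive_n, CPS_derive.
  rewrite Nat.add_succ_r, <- Nat.add_succ_l. change (fact (S n)) with (S n * fact n)%nat.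
  rewrite Cmult_assoc, <- RtoC_mult. do 2 f_equal.
  rewrite mult_INR. pose proof (INR_fact_lt_0 n). pose proof (pos_INR n). rewrite S_INR.
  field. split; lra.
Qed.

Lemma radius_ge_CPS_derive_n a r k : radius_ge a r -> radius_ge (CPS_derive_n k a) r.
Proof.
  intros Ha. induction k as [|k IH].
  - intros rho Hrho. destruct (Ha rho Hrho) as [M HM]. exists M. intros n.
    rewrite CPS_derive_n_0. apply HM.
  - rewrite CPS_derive_n_S. apply radius_ge_CPS_derive, IH.
Qed.

Lemma radius_ge_of_exp_bound a K A : 0 < A -> (forall n, Cmod (a n) <= K * A ^ n) ->
  radius_ge a (/ A).
Proof.
  intros HA Ha rho Hrho. exists (Rabs K). intros n.
  assert (Hq : 0 <= A * rho <= 1).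
  { split; [nra|]. apply (Rmult_le_reg_r (/ A)); [apply Rinv_0_lt_compat, HA|].
    replace (A * rho * / A) with rho by (field; lra). lra. }
  assert ((A * rho) ^ n <= 1) by (rewrite <- (pow1 n); apply pow_incr; lra).
  pose proof (pow_le (A * rho) n ltac:(lra)). pose proof (Rle_abs K). pose proof (Rabs_pos K).
  pose proof (pow_le rho n ltac:(lra)). specialize (Ha n).
  apply Rle_trans with (K * A ^ n * rho ^ n); [apply Rmult_le_compat_r; lra|].
  rewrite Rmult_assoc, <- Rpow_mult_distr. nra.
Qed.

(* The [N]-th term of [sum g(N) h(N) z^N] after Newton's formula for [h(N)], as a triangular
   array whose [m]-th row sums to the [m]-th term of the claimed expansion. *)
Definition newton_term (g h : nat -> C) (z : C) (m N : nat) : C :=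
  if (m <=? N)%nat then
    (CPS_derive_n m g (N - m) * Cp z (N - m) * fdiff m h 0 * Cp z m / INR (fact m))%C
  else 0%C.

Lemma INR_fact_ratio N m : (m <= N)%nat ->
  INR (fact N) / INR (fact (N - m)) = INR (binom N m) * INR (fact m).
Proof.
  intros HmN. pose proof (f_equal INR (binom_fact (N - m) m)) as H.
  replace (N - m + m)%nat with N in H by lia. rewrite !mult_INR in H.
  pose proof (INR_fact_lt_0 (N - m)). rewrite <- H. field. lra.
Qed.

Lemma RtoC_INR_fact_neq_0 m : RtoC (INR (fact m)) <> 0%C.
Proof. intros E. apply (f_equal fst) in E. simpl in E. exact (INR_fact_neq_0 m E). Qed.

Lemma newton_term_eq g h z m N : (m <= N)%nat ->
  newton_term g h z m N = (g N * Cp z N * (INR (binom N m) * fdiff m h 0))%C.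
Proof.
  intros HmN. unfold newton_term, CPS_derive_n.
  replace (m <=? N)%nat with true by (symmetry; apply Nat.leb_le, HmN).
  replace (N - m + m)%nat with N by lia. rewrite INR_fact_ratio, RtoC_mult by exact HmN.
  replace (Cp z N) with (Cp z (N - m) * Cp z m)%C by (rewrite <- Cp_plus; f_equal; lia).
  field. apply RtoC_INR_fact_neq_0.
Qed.

Lemma sum_newton_term g h z N :
  sum_n (fun m => newton_term g h z m N) N = (g N * h N * Cp z N)%C.
Proof.
  rewrite (sum_n_ext_loc _ (fun m => mult (g N * Cp z N)%C (INR (binom N m) * fdiff m h 0)%C))
    by (intros m Hm; apply newton_term_eq; lia).
  transitivity (g N * Cp z N * h (N + 0)%nat)%C.
  - rewrite (fdiff_newton h N 0). apply (sum_n_mult_l (K := C_Ring)).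
  - rewrite Nat.add_0_r. change ((g N * Cp z N * h N)%C = (g N * h N * Cp z N)%C). ring.
Qed.

Lemma Cmod_newton_term_le g h z Kg Kh A m N : 1 <= A ->
  (forall n, Cmod (g n) <= Kg * A ^ n) -> (forall n, Cmod (h n) <= Kh * A ^ n) ->
  Cmod (newton_term g h z m N) <= Kg * Kh * (A * Cmod z) ^ N * (INR (binom N m) * (2 * A) ^ m).
Proof.
  intros HA Hg Hh.
  assert (HKg : 0 <= Kg) by (specialize (Hg O); pose proof (Cmod_ge_0 (g O)); simpl in Hg; lra).
  assert (HKh : 0 <= Kh) by (specialize (Hh O); pose proof (Cmod_ge_0 (h O)); simpl in Hh; lra).
  destruct (le_lt_dec m N) as [HmN|HNm].
  - rewrite newton_term_eq, !Cmod_mult, Cmod_R, Rabs_pos_eq, Cmod_Cp by (apply pos_INR || exact HmN).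
    pose proof (fdiff_bound h Kh A HA Hh m 0) as Hf. rewrite Nat.add_0_l in Hf.
    pose proof (Hg N). pose proof (pos_INR (binom N m)).
    pose proof (pow_le (Cmod z) N (Cmod_ge_0 z)). pose proof (Cmod_ge_0 (fdiff m h 0)).
    replace (Kg * Kh * (A * Cmod z) ^ N * (INR (binom N m) * (2 * A) ^ m))
      with (Kg * A ^ N * Cmod z ^ N * (INR (binom N m) * (Kh * 2 ^ m * A ^ m)))
      by (rewrite !Rpow_mult_distr; ring).
    apply Rmult_le_compat; [apply Rmult_le_pos; [apply Cmod_ge_0|lra]
                           |apply Rmult_le_pos; lra
                           |apply Rmult_le_compat_r; lra
                           |apply Rmult_le_compat_l; lra].
  - unfold newton_term. replace (m <=? N)%nat with false by (symmetry; apply Nat.leb_gt, HNm).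
    rewrite Cmod_0, binom_gt by exact HNm. simpl. lra.
Qed.

Lemma sum_Cmod_newton_term_le g h z Kg Kh A N : 1 <= A ->
  (forall n, Cmod (g n) <= Kg * A ^ n) -> (forall n, Cmod (h n) <= Kh * A ^ n) ->
  sum_n (fun m => Cmod (newton_term g h z m N)) N <= Kg * Kh * (A * (1 + 2 * A) * Cmod z) ^ N.
Proof.
  intros HA Hg Hh.
  eapply Rle_trans; [apply sum_n_m_le; intros m; apply (Cmod_newton_term_le g h z Kg Kh A m N HA Hg Hh)|].
  change (sum_n (fun m => mult (Kg * Kh * (A * Cmod z) ^ N) (INR (binom N m) * (2 * A) ^ m)) N
          <= Kg * Kh * (A * (1 + 2 * A) * Cmod z) ^ N).
  rewrite sum_n_mult_l. change (mult ?a ?b) with (a * b).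
  change (sum_n (fun m => INR (binom N m) * (2 * A) ^ m) N) with
    (@sum_n R_AbelianMonoid (fun m => INR (binom N m) * (2 * A) ^ m) N).
  rewrite <- binomial_sum, !Rpow_mult_distr. right. ring.
Qed.

Lemma is_series_newton_term g h z r m : radius_ge g r -> Cmod z < r ->
  is_series (fun N => newton_term g h z m N)
            (CPSeries (CPS_derive_n m g) z * fdiff m h 0 * Cp z m / INR (fact m))%C.
Proof.
  intros Hg Hz. apply (is_series_zero_prefix _ m).
  - intros k Hk. unfold newton_term.
    replace (m <=? k)%nat with false by (symmetry; apply Nat.leb_gt, Hk). reflexivity.
  - set (cst := (fdiff m h 0 * Cp z m / INR (fact m))%C).
    pose proof (is_series_scal cst _ _
                  (is_series_CPSeries _ r z (radius_ge_CPS_derive_n g r m Hg) Hz)) as H.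
    replace (CPSeries (CPS_derive_n m g) z * fdiff m h 0 * Cp z m / INR (fact m))%C
      with (scal cst (CPSeries (CPS_derive_n m g) z))
      by (change (cst * CPSeries (CPS_derive_n m g) z =
                  CPSeries (CPS_derive_n m g) z * fdiff m h 0 * Cp z m / INR (fact m))%C;
          unfold cst; field; apply RtoC_INR_fact_neq_0).
    eapply is_series_ext; [|exact H]. intros n. unfold newton_term.
    replace (m <=? n + m)%nat with true by (symmetry; apply Nat.leb_le; lia).
    rewrite Nat.add_sub. change (cst * (CPS_derive_n m g n * Cp z n) =
      CPS_derive_n m g n * Cp z n * fdiff m h 0 * Cp z m / INR (fact m))%C.
    unfold cst. field. apply RtoC_INR_fact_neq_0.
Qed.

Lemma newton_expansion_at g h Kg Kh A z : 1 <= A ->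
  (forall n, Cmod (g n) <= Kg * A ^ n) -> (forall n, Cmod (h n) <= Kh * A ^ n) ->
  Cmod z < / (A * (1 + 2 * A)) ->
  exists L : C,
    is_series (fun n => (g n * h n * Cp z n)%C) L /\
    is_series (fun m => (CPSeries (CPS_derive_n m g) z * fdiff m h 0 * Cp z m / INR (fact m))%C) L.
Proof.
  intros HA Hg Hh Hz.
  assert (Hq : 0 <= A * (1 + 2 * A) * Cmod z < 1).
  { pose proof (Cmod_ge_0 z). split; [apply Rmult_le_pos; nra|].
    apply (Rmult_lt_reg_r (/ (A * (1 + 2 * A)))); [apply Rinv_0_lt_compat; nra|].
    replace (A * (1 + 2 * A) * Cmod z * / (A * (1 + 2 * A))) with (Cmod z) by (field; nra).
    lra. }
  assert (HrA : / (A * (1 + 2 * A)) <= / A) by (apply Rinv_le_contravar; nra).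
  assert (Habs : ex_series (fun N => sum_n (fun m => Cmod (newton_term g h z m N)) N)).
  { apply (ex_series_Rle _ (fun N => Kg * Kh * (A * (1 + 2 * A) * Cmod z) ^ N));
      [|apply ex_series_geom_scal, Hq].
    intros N. split; [apply sum_n_nonneg; intros; apply Cmod_ge_0|].
    apply sum_Cmod_newton_term_le; assumption. }
  assert (Hdiag : ex_series (fun N => sum_n (fun m => newton_term g h z m N) N)).
  { apply (ex_series_le (K := C_AbsRing) (V := C_CompleteNormedModule)) with (2 := Habs).
    intros N. apply (norm_sum_n_m (fun m => newton_term g h z m N) 0 N). }
  exists (Csum (fun N => sum_n (fun m => newton_term g h z m N) N)). split.
  - eapply is_series_ext; [|apply is_series_Csum, Hdiag]. intros N. exact (sum_newton_term g h z N).
  - apply (is_series_triangle_swap (newton_term g h z));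
      [| |exact Habs|apply is_series_Csum, Hdiag].
    + intros m N HNm. unfold newton_term.
      replace (m <=? N)%nat with false by (symmetry; apply Nat.leb_gt, HNm). reflexivity.
    + intros m. apply (is_series_newton_term g h z (/ A)); [|lra].
      apply (radius_ge_of_exp_bound g Kg); [lra|exact Hg].
Qed.

Lemma newton_series_expansion (g h : nat -> C) (c : R) :
  0 <= c -> bigO_exp c g -> bigO_exp c h ->
  exists r : R, 0 < r /\
  exists Gd : nat -> C -> C,
    (forall z : C, Cmod z < r -> is_series (fun n => (g n * Cp z n)%C) (Gd O z)) /\
    (forall (m : nat) (z : C), Cmod z < r ->
       @is_derive C_AbsRing C_NormedModule (Gd m) z (Gd (S m) z)) /\
    (forall z : C, Cmod z < r ->
       exists L : C,
         is_series (fun n => (g n * h n * Cp z n)%C) L /\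
         is_series (fun m => (Gd m z * fdiff m h 0 * Cp z m / INR (fact m))%C) L).
Proof.
  intros Hc Hg Hh.
  destruct (bigO_exp_everywhere c g Hc Hg) as [Kg Hgb].
  destruct (bigO_exp_everywhere c h Hc Hh) as [Kh Hhb].
  set (A := exp c) in *.
  assert (HA : 1 <= A) by (unfold A; pose proof (exp_ineq1_le c); lra).
  assert (HrA : 0 < / (A * (1 + 2 * A)) <= / A).
  { split; [apply Rinv_0_lt_compat; nra|apply Rinv_le_contravar; nra]. }
  assert (Hrad : forall m, radius_ge (CPS_derive_n m g) (/ A)).
  { intros m. apply radius_ge_CPS_derive_n, (radius_ge_of_exp_bound g Kg); [lra|exact Hgb]. }
  exists (/ (A * (1 + 2 * A))). split; [lra|].
  exists (fun m => CPSeries (CPS_derive_n m g)). split; [|split].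
  - intros z Hz. eapply is_series_ext; [|apply (is_series_CPSeries _ (/ A) z (Hrad O)); lra].
    intros n. cbv beta. rewrite CPS_derive_n_0. reflexivity.
  - intros m z Hz. rewrite CPS_derive_n_S. apply (is_derive_CPSeries _ (/ A)); [apply Hrad|lra].
  - intros z Hz. exact (newton_expansion_at g h Kg Kh A z HA Hgb Hhb Hz).
Qed.

Theorem mainTheorem8 :
  (forall (g h : nat -> C) (c : R), 0 <= c -> bigO_exp c g -> bigO_exp c h ->
    exists r : R, 0 < r /\
    exists Gd : nat -> C -> C,
      (forall z : C, Cmod z < r ->
         is_series (fun n : nat => Cmult (g (S n)) (Cp z n)) (Gd O z)) /\
      (forall (m : nat) (z : C), Cmod z < r ->
         @is_derive C_AbsRing C_NormedModule (Gd m) z (Gd (S m) z)) /\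
      (forall z : C, Cmod z < r ->
         exists L : C,
           is_series (fun n : nat => Cmult (Cmult (g (S n)) (h (S n))) (Cp z n)) L /\
           is_series (fun m : nat =>
              Cdiv (Cmult (Cmult (Gd m z) (fdiff m h 1%nat)) (Cp z m))
                   (RtoC (INR (Stdlib.Arith.Factorial.fact m)))) L))
  /\
  (forall (g h : nat -> C) (c : R), 0 <= c -> bigO_exp c g -> bigO_exp c h ->
    exists r : R, 0 < r /\
    exists Gd : nat -> C -> C,
      (forall z : C, Cmod z < r ->
         is_series (fun n : nat => Cmult (g n) (Cp z n)) (Gd O z)) /\
      (forall (m : nat) (z : C), Cmod z < r ->
         @is_derive C_AbsRing C_NormedModule (Gd m) z (Gd (S m) z)) /\
      (forall z : C, Cmod z < r ->
         exists L : C,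
           is_series (fun n : nat => Cmult (Cmult (g n) (h n)) (Cp z n)) L /\
           is_series (fun m : nat =>
              Cdiv (Cmult (Cmult (Gd m z) (fdiff m h 0%nat)) (Cp z m))
                   (RtoC (INR (Stdlib.Arith.Factorial.fact m)))) L)).
Proof.
  split; [|exact newton_series_expansion].
  intros g h c Hc Hg Hh.
  destruct (newton_series_expansion (fun n => g (S n)) (fun n => h (S n)) c Hc
              (bigO_exp_shift c g Hg) (bigO_exp_shift c h Hh))
    as [r [Hr [Gd [HG0 [HGd Hexp]]]]].
  exists r. split; [exact Hr|]. exists Gd. split; [exact HG0|]. split; [exact HGd|].
  intros z Hz. destruct (Hexp z Hz) as [L [HL1 HL2]]. exists L. split; [exact HL1|].
  eapply is_series_ext; [|exact HL2]. intros m. cbv beta. rewrite fdiff_shift. reflexivity.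
Qed.
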